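(* Let $k\ge1$, let $(A,t)$ be a $\mathcal{C}_k$-algebra and let $K(A)=\{x\in A: t(x)=x=\nabla x\}$. Then: (a) $K(A)$ is a subalgebra of the $mpM$-algebra $A$ (closed under $\wedge,\vee,\sim,{}^\ast,0,1$); (b) $K(A)$ is a Boolean algebra; (c) if $(S,t_S)$ is a $\mathcal{C}_k$-subalgebra of $(A,t)$, then $K(S)=K(A)\cap S$; (d) for $a\in A$, the principal lattice filter $[a)$ is a $c$-filter if and only if $a\in K(A)$; (e) if $a\in K(A)$, then $D(a)=[a)$.
   Context: A modal pseudocomplemented De Morgan algebra ($mpM$-algebra) is an algebra $\langle A,\wedge,\vee,\sim,{}^\ast,0,1\rangle$ such that $\langle A,\wedge,\vee,\sim,0,1\rangle$ is a De Morgan algebra (bounded distributive lattice with $\sim\sim x=x$, $\sim(x\vee y)=\sim x\wedge\sim y$), $x^\ast$ is the pseudocomplement of $x$, and $x\vee\sim x\le x\vee x^\ast$. Put $\nabla x=\sim(\sim x\wedge x^\ast)$, $\triangle x=\sim\nabla\sim x$. A $\mathcal{C}_k$-algebra ($k\ge1$) is a pair $(A,t)$ with $A$ an $mpM$-algebra and $t$ an $mpM$-automorphism of $A$ with $t^k=\mathrm{id}$. A $c$-filter is a lattice filter $F$ with $x\in F\Rightarrow\triangle x\in F$ and $t(x)\in F$. The cyclic implication is $a\rightharpoondown b=\bigvee_{i=1}^{k}\nabla(\sim t^i(a))\vee b$; a cyclic deductive system is a set $D\ni 1$ such that $x,\,x\rightharpoondown y\in D$ imply $y\in D$; $D(a)$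 is the smallest cyclic deductive system containing $a$. *)

From HB Require Import structures.
From mathcomp Require Import all_boot all_order.
Set Implicit Arguments. Unset Strict Implicit. Unset Printing Implicit Defensive.
Import Order.TTheory.
Local Open Scope order_scope.

Section MpM.
Context {disp : Order.disp_t} {L : tbDistrLatticeType disp}.
Variables (neg star : L -> L).

Definition deMorgan : Prop :=
  (forall x : L, neg (neg x) = x) /\
  (forall x y : L, neg (x `|` y) = neg x `&` neg y).

Definition pseudocomplement : Prop :=
  forall x y : L, (x `&` y == \bot) = (y <= star x).

Definition mpM_algebra : Prop :=
  [/\ deMorgan, pseudocomplement &
      forall x : L, x `|` neg x <= x `|` star x].

Definition nabla (x : L) : L := neg (neg x `&` star x).
Definition delta (x : L) : L := neg (nabla (neg x)).

Definition mpM_automorphism (t : L -> L) : Prop :=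
  bijective t /\
  (forall x y, t (x `&` y) = t x `&` t y) /\
  (forall x y, t (x `|` y) = t x `|` t y) /\
  (forall x, t (neg x) = neg (t x)) /\
  (forall x, t (star x) = star (t x)) /\
  t \bot = \bot /\ t \top = \top.

Definition Ck_algebra (k : nat) (t : L -> L) : Prop :=
  [/\ (1 <= k)%N, mpM_algebra, mpM_automorphism t &
      forall x, iter k t x = x].

Definition Kset (t : L -> L) (x : L) : Prop := t x = x /\ x = nabla x.

Definition mpM_subalgebra (S : L -> Prop) : Prop :=
  (forall x y, S x -> S y -> S (x `&` y)) /\
  (forall x y, S x -> S y -> S (x `|` y)) /\
  (forall x, S x -> S (neg x)) /\
  (forall x, S x -> S (star x)) /\
  S \bot /\ S \top.

(* C_k-subalgebra: an mpM-subalgebra closed under t (t_S = restriction of t) *)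
Definition Ck_subalgebra (t : L -> L) (S : L -> Prop) : Prop :=
  mpM_subalgebra S /\ (forall x, S x -> S (t x)).

(* K(S) computed inside the subalgebra S (with S's own operations, which are
   the restrictions of those of A) *)
Definition Kset_sub (t : L -> L) (S : L -> Prop) (x : L) : Prop :=
  S x /\ t x = x /\ x = nabla x.

(* the subset P (a subalgebra) is a Boolean algebra: every element has a
   complement inside P *)
Definition boolean_subset (P : L -> Prop) : Prop :=
  forall x, P x -> exists y, P y /\ x `&` y = \bot /\ x `|` y = \top.

Definition lattice_filter (F : L -> Prop) : Prop :=
  [/\ F \top,
      (forall x y, F x -> x <= y -> F y) &
      (forall x y, F x -> F y -> F (x `&` y))].

Definition c_filter (t : L -> L) (F : L -> Prop) : Prop :=
  [/\ lattice_filter F,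
      (forall x, F x -> F (delta x)) &
      (forall x, F x -> F (t x))].

Definition principal_filter (a : L) (x : L) : Prop := a <= x.

Definition cyc_imp (k : nat) (t : L -> L) (a b : L) : L :=
  (\join_(1 <= i < k.+1) nabla (neg (iter i t a))) `|` b.

Definition cyclic_ds (k : nat) (t : L -> L) (D : L -> Prop) : Prop :=
  D \top /\ (forall x y, D x -> D (cyc_imp k t x y) -> D y).

Definition Dgen (k : nat) (t : L -> L) (a : L) (x : L) : Prop :=
  forall D, cyclic_ds k t D -> D a -> D x.

End MpM.

From HB Require Import structures.
From mathcomp Require Import all_boot all_order.
Set Implicit Arguments. Unset Strict Implicit. Unset Printing Implicit Defensive.
Import Order.TTheory.
Local Open Scope order_scope.

(* The key observation is that, in a De Morgan algebra with pseudocomplement,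
   x = nabla x holds iff x is complemented by its De Morgan negation,
   i.e. x `|` neg x = \top; for such x one moreover has star x = neg x.
   So K(A) = {x | t x = x and x `|` neg x = \top}. *)

Section Proposition4p4.
Context {disp : Order.disp_t} {L : tbDistrLatticeType disp}.
Variables (neg star : L -> L).
Hypothesis negK : forall x, neg (neg x) = x.
Hypothesis negU : forall x y, neg (x `|` y) = neg x `&` neg y.
Hypothesis starP : forall x y, (x `&` y == \bot) = (y <= star x).

Local Notation nabla := (nabla neg star).
Local Notation delta := (delta neg star).

Lemma negI x y : neg (x `&` y) = neg x `|` neg y.
Proof. by rewrite -[x]negK -[y]negK -negU !negK. Qed.

Lemma negM x y : x <= y -> neg y <= neg x.
Proof. by move=> /join_idPl; rewrite joinC => <-; rewrite negU leIl. Qed.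

Lemma neg_top : neg \top = \bot.
Proof.
apply/le_anti; rewrite le0x andbT.
by have := negU (neg \bot) \top; rewrite joinx1 negK => ->; rewrite leIl.
Qed.

Lemma neg_bot : neg \bot = \top.
Proof. by rewrite -neg_top negK. Qed.

Lemma meet_star x : x `&` star x = \bot.
Proof. by apply/eqP; rewrite starP. Qed.

Lemma starM x y : x <= y -> star y <= star x.
Proof.
move=> xy; rewrite -starP; apply/eqP/le_anti; rewrite le0x andbT.
by rewrite -(meet_star y) leI2.
Qed.

Lemma nablaE x : nabla x = x `|` neg (star x).
Proof. by rewrite /nabla negI negK. Qed.

Lemma deltaE x : delta x = x `&` star (neg x).
Proof. by rewrite /delta /nabla !negK. Qed.

Lemma nablaM x y : x <= y -> nabla x <= nabla y.
Proof. by move=> xy; rewrite !nablaE leU2 // negM // starM. Qed.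

Definition neg_complemented (x : L) : Prop := x `|` neg x = \top.

(* By duality, neg x is a complement of x as soon as it is disjoint from x. *)
Lemma neg_complementedP x : x `&` neg x = \bot <-> neg_complemented x.
Proof.
rewrite /neg_complemented; split=> h.
  by rewrite -neg_bot -h negI negK joinC.
by rewrite -neg_top -h negU negK meetC.
Qed.

Lemma star_complemented x : neg_complemented x -> star x = neg x.
Proof.
move=> h; apply/le_anti; apply/andP; split.
  by rewrite -[star x]meetx1 -h meetUr meetC meet_star join0x leIr.
by rewrite -starP; apply/eqP/neg_complementedP.
Qed.

Lemma nabla_fixP x : x = nabla x <-> neg_complemented x.
Proof.
rewrite nablaE; split=> h.
  apply/le_anti; rewrite lex1 /=.
  have <- : neg x `|` neg (star x) = \top by rewrite -negI meet_star neg_bot.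
  by rewrite joinC leU2 // {2}h leUr.
by rewrite star_complemented // negK joinxx.
Qed.

Lemma complemented_neg x : neg_complemented x -> neg_complemented (neg x).
Proof. by rewrite /neg_complemented negK joinC. Qed.

Lemma complemented_meet x y :
  neg_complemented x -> neg_complemented y -> neg_complemented (x `&` y).
Proof.
move=> hx hy; rewrite /neg_complemented negI joinIl.
apply/le_anti; rewrite lex1 /= lexI -{1}hx -hy.
by rewrite !leU2 // ?leUl ?leUr.
Qed.

Lemma complemented_join x y :
  neg_complemented x -> neg_complemented y -> neg_complemented (x `|` y).
Proof.
move=> hx hy; rewrite -[x `|` y]negK negU.
by apply/complemented_neg/complemented_meet; apply: complemented_neg.
Qed.

Lemma complemented_star x : neg_complemented x -> neg_complemented (star x).
Proof. by move=> hx; rewrite star_complemented //; apply: complemented_neg. Qed.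

Lemma complemented_bot : neg_complemented \bot.
Proof. by rewrite /neg_complemented neg_bot joinx1. Qed.

Lemma complemented_top : neg_complemented \top.
Proof. by rewrite /neg_complemented join1x. Qed.

Lemma complemented_mp a z : neg_complemented a -> a <= neg a `|` z -> a <= z.
Proof.
move=> ha h; have disj := proj2 (neg_complementedP a) ha.
by rewrite -(meet_idPl h) meetUr disj join0x leIr.
Qed.

Lemma delta_closed_principal a :
  (forall x, a <= x -> a <= delta x) <-> neg_complemented a.
Proof.
split=> [hd | ha x ax].
  apply/neg_complementedP; have := hd a (lexx a).
  by rewrite deltaE lexI lexx /= -starP meetC => /eqP.
rewrite deltaE lexI ax /= -starP; apply/eqP/le_anti; rewrite le0x andbT.
by rewrite -(proj2 (neg_complementedP a) ha) meetC leI2 // negM.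
Qed.

Variable t : L -> L.
Hypothesis tI : forall x y, t (x `&` y) = t x `&` t y.

Lemma meet_morph_mono x y : x <= y -> t x <= t y.
Proof. by move=> /meet_idPl h; apply/meet_idPl; rewrite -tI h. Qed.

Lemma iter_mono n x y : x <= y -> iter n t x <= iter n t y.
Proof. by elim: n => [|n IH] //= h; apply/meet_morph_mono/IH. Qed.

Lemma iter_fixed n a : t a = a -> iter n t a = a.
Proof. by move=> ha; elim: n => [|n IH] //=; rewrite IH. Qed.

(* If t has finite period k >= 1 and [a) is t-invariant, then t a = a:
   a <= t^(k-1) a gives t a <= t^k a = a. *)
Lemma periodic_invariant_fixed k a :
  (0 < k)%N -> (forall x, iter k t x = x) ->
  (forall x, a <= x -> a <= t x) -> t a = a.
Proof.
move=> k0 tk ht; have hn n : a <= iter n t a by elim: n => [|n IH] //=; apply: ht.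
apply/le_anti; rewrite ht // andbT.
by have := meet_morph_mono (hn k.-1); rewrite -iterS prednK // tk.
Qed.

Variable k : nat.
Hypothesis tU : forall x y, t (x `|` y) = t x `|` t y.
Hypothesis tN : forall x, t (neg x) = neg (t x).
Hypothesis tS : forall x, t (star x) = star (t x).
Hypothesis t0 : t \bot = \bot.
Hypothesis t1 : t \top = \top.

Local Notation K := (Kset neg star t).

Lemma KsetP x : K x <-> t x = x /\ neg_complemented x.
Proof. by split=> -[tx hx]; split=> //; apply/nabla_fixP. Qed.

Lemma K_subalgebra : mpM_subalgebra neg star K.
Proof.
split; [|split; [|split; [|split; [|split]]]].
- move=> x y /KsetP[tx hx] /KsetP[ty hy]; apply/KsetP.
  by rewrite tI tx ty; split; last exact: complemented_meet.
- move=> x y /KsetP[tx hx] /KsetP[ty hy]; apply/KsetP.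
  by rewrite tU tx ty; split; last exact: complemented_join.
- by move=> x /KsetP[tx hx]; apply/KsetP; rewrite tN tx; split; last exact: complemented_neg.
- by move=> x /KsetP[tx hx]; apply/KsetP; rewrite tS tx; split; last exact: complemented_star.
- by apply/KsetP; split; last exact: complemented_bot.
- by apply/KsetP; split; last exact: complemented_top.
Qed.

(* Part (b): neg x is a complement of x inside K(A). *)
Lemma K_boolean : boolean_subset K.
Proof.
move=> x Kx; exists (neg x); have [tx hx] := proj1 (KsetP x) Kx.
split; first by apply/KsetP; rewrite tN tx; split; last exact: complemented_neg.
by split=> //; apply/neg_complementedP.
Qed.

Lemma principal_c_filterP a :
  (0 < k)%N -> (forall x, iter k t x = x) ->
  c_filter neg star t (principal_filter a) <-> K a.
Proof.
move=> k0 tk; split.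
  case=> _ hd ht; apply/KsetP; split; first exact: periodic_invariant_fixed tk ht.
  exact/delta_closed_principal.
move=> /KsetP[ta /delta_closed_principal hd]; split=> //.
- split; first exact: lex1.
    by move=> x y ax xy; apply: le_trans xy.
  by move=> x y ax ay; rewrite /principal_filter lexI ax ay.
- by move=> x ax; rewrite /principal_filter -ta meet_morph_mono.
Qed.

(* The principal filter of an element of K(A) is a cyclic deductive system:
   every term nabla (neg (t^i y)) of y ⇀ z lies below nabla (neg a) = neg a. *)
Lemma principal_cyclic_ds a : K a -> cyclic_ds neg star k t (principal_filter a).
Proof.
move=> /KsetP[ta ha]; split; first exact: lex1.
move=> y z ay; rewrite /principal_filter /cyc_imp => h.
have hJ : \join_(1 <= i < k.+1) nabla (neg (iter i t y)) <= neg a.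
  apply: (big_ind (fun u => u <= neg a)) => // [u v hu hv|i _].
    by rewrite leUx hu hv.
  rewrite [neg a](nabla_fixP (neg a)).2; last exact: complemented_neg.
  by apply/nablaM/negM => //; rewrite -(iter_fixed i ta) iter_mono.
exact: complemented_mp ha (le_trans h (leU2 hJ (lexx z))).
Qed.

(* For a in K(A) and a <= x, the implication a ⇀ x is \top: its first term
   nabla (neg (t a)) is above neg a, and neg a `|` x is above neg a `|` a. *)
Lemma cyc_imp_top a x : (0 < k)%N -> K a -> a <= x -> cyc_imp neg star k t a x = \top.
Proof.
move=> k0 /KsetP[ta ha] ax; apply/le_anti; rewrite lex1 /= /cyc_imp big_ltn // -ha.
rewrite /= ta leUx (le_trans ax (leUr _ _)) /=.
by rewrite -joinA (le_trans _ (leUl _ _)) // nablaE leUl.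
Qed.

Lemma Dgen_principal a :
  (0 < k)%N -> K a -> forall x, Dgen neg star k t a x <-> principal_filter a x.
Proof.
move=> k0 Ka x; split; first by apply; [exact: principal_cyclic_ds | exact: lexx].
move=> ax D [DT Dmp] Da; apply: (Dmp a) => //.
by rewrite cyc_imp_top.
Qed.

End Proposition4p4.

Theorem proposition4p4 (disp : Order.disp_t) (L : tbDistrLatticeType disp)
    (neg star : L -> L) (k : nat) (t : L -> L) :
  Ck_algebra neg star k t ->
  [/\ mpM_subalgebra neg star (Kset neg star t),
      boolean_subset (Kset neg star t),
      (forall S : L -> Prop, Ck_subalgebra neg star t S ->
         forall x, Kset_sub neg star t S x <-> (Kset neg star t x /\ S x)),
      (forall a : L, c_filter neg star t (principal_filter a) <->
                     Kset neg star t a) &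
      (forall a : L, Kset neg star t a ->
         forall x, Dgen neg star k t a x <-> principal_filter a x)].
Proof.
case=> k0 [[negK negU] starP _] [_ [tI [tU [tN [tS [t0 t1]]]]]] tk.
split.
- exact: K_subalgebra.
- exact: K_boolean.
- by move=> S _ x; rewrite /Kset_sub /Kset; tauto.
- by move=> a; exact: (principal_c_filterP negK negU starP tI a k0 tk).
- by move=> a; exact: (Dgen_principal negK negU starP tI k0).
Qed.
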